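(* There is an infinite family of directed graphs (with unit arc lengths) such that, with $n$ the number of vertices, the greedy algorithm g-HHL finds a hierarchical hub labeling of size $\Omega(n^{3/2})$ while the optimal hierarchical hub labeling has size $O(n)$.
   Context: For a directed graph $G=(V,E)$, $n=|V|$, a hub labeling assigns forward and backward labels $L_f(v),L_b(v)\subseteq V$ such that for every ordered pair $(u,w)$ with $w$ reachable from $u$, $L_f(u)\cap L_b(w)$ contains a vertex on a shortest $u$–$w$ path; its size is $\sum_v(|L_f(v)|+|L_b(v)|)$. It is hierarchical (HHL) if there is a bijection $\pi:V\to\{1,\dots,n\}$ with $u\in L_f(v)\cup L_b(v)\Rightarrow\pi(u)\le\pi(v)$. g-HHL: start with empty labels; $U$ is the set of uncovered pairs. For each not-yet-selected vertex $v$, the center graph is the bipartite graph with two copies $X,Y$ of $V$ and an arc $(u,w)$ for each $(u,w)\in U$ having a shortest $u$–$w$ path through $v$. Each iteration selects a not-yet-selected $v$ whose center graph has the most edges and adds $v$ to $L_f(u)$ for all non-isolated $u\in X$ and to $L_b(w)$ for all non-isolated $w\in Y$, until all pairs are covered. *)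

From mathcomp Require Import all_boot.
From mathcomp Require Import boolp.

Set Implicit Arguments.
Unset Strict Implicit.
Unset Printing Implicit Defensive.

Section HubLabels.
Variable V : finType.
Variable e : rel V.  (* directed graph; every arc has length 1 *)

Definition walk (u w : V) (k : nat) : Prop :=
  exists p : seq V, [/\ path e u p, last u p = w & size p = k].

Definition reachable (u w : V) : Prop := exists k, walk u w k.

Definition dist_is (u w : V) (d : nat) : Prop :=
  walk u w d /\ forall k, walk u w k -> d <= k.

Definition on_sp (u v w : V) : Prop :=
  exists d1 d2, [/\ dist_is u v d1, dist_is v w d2 & dist_is u w (d1 + d2)].

Definition covers (Lf Lb : V -> {set V}) (u w : V) : Prop :=
  exists h, [/\ h \in Lf u, h \in Lb w & on_sp u h w].

Definition is_hub_labeling (Lf Lb : V -> {set V}) : Prop :=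
  forall u w, reachable u w -> covers Lf Lb u w.

Definition hl_size (Lf Lb : V -> {set V}) : nat :=
  \sum_(v : V) (#|Lf v| + #|Lb v|).

Definition is_hierarchical (Lf Lb : V -> {set V}) : Prop :=
  exists pi : V -> 'I_#|V|, bijective pi /\
    forall u v, u \in Lf v :|: Lb v -> (pi u <= pi v)%N.

Definition labels := ((V -> {set V}) * (V -> {set V}))%type.

Definition empty_labels : labels := (fun _ => set0, fun _ => set0).

Definition uncovered (L : labels) : {set V * V} :=
  [set p | `[< reachable p.1 p.2 /\ ~ covers L.1 L.2 p.1 p.2 >]].

Definition center (L : labels) (v : V) : {set V * V} :=
  [set p in uncovered L | `[< on_sp p.1 v p.2 >]].

(* select v: add v to L_f(u) for non-isolated u in X, to L_b(w) for non-isolated w in Y *)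
Definition gstep (L : labels) (v : V) : labels :=
  let C := center L v in
  (fun u => if [exists w, (u, w) \in C] then v |: L.1 u else L.1 u,
   fun w => if [exists u, (u, w) \in C] then v |: L.2 w else L.2 w).

Definition grun (s : seq V) : labels := foldl gstep empty_labels s.

(* s is a complete execution of g-HHL (with some tie-breaking):
   at every iteration there are uncovered pairs, the chosen vertex is not yet
   selected and its center graph has the maximum number of edges among the
   not-yet-selected vertices; at the end all pairs are covered. *)
Definition ghhl_run (s : seq V) : Prop :=
  (forall s1 v s2, s = s1 ++ v :: s2 ->
     [/\ uncovered (grun s1) != set0, v \notin s1 &
         forall x, x \notin s1 -> #|center (grun s1) x| <= #|center (grun s1) v|])
  /\ uncovered (grun s) = set0.

End HubLabels.

From mathcomp Require Import all_boot.
From mathcomp Require Import boolp.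
From mathcomp Require Import zify.

Set Implicit Arguments.
Unset Strict Implicit.
Unset Printing Implicit Defensive.

(* The graph has three layers: k sources, k+1 hubs and (k+1)^2 leaves, every
   hub having k+1 leaf children; each source points to each hub and each hub
   to its children, so n is about k^2. Labelling every source with all hubs
   and every leaf with its parent hub covers all pairs with O(n) labels, and
   is hierarchical once the hubs are ranked first. The greedy algorithm is
   lured by the sources instead: while only sources have been selected, an
   unselected source x has an empty forward label, so the pairs (x, w) with
   w = x or w not a source are all uncovered and all pass through x. Its
   center graph thus has (k+1)(k+2)+1 edges, whereas the center graph of a
   hub has at most (k+1)(k+2) edges and that of a leaf at most k+2. Hence
   g-HHL selects all sources first, and each of them enters L_b(w) for all
   (k+1)^2 leaves w: the labeling has size at least k(k+1)^2, which is
   Omega(n^{3/2}). *)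

Lemma card_setU1_le (T : finType) (a : T) (A : {set T}) : #|a |: A| <= #|A|.+1.
Proof. by rewrite cardsU1; case: (a \notin A). Qed.

Section Walks.
Variables (V : finType) (e : rel V).

Lemma walk_cat u v w k1 k2 : walk e u v k1 -> walk e v w k2 -> walk e u w (k1 + k2).
Proof.
case=> p1 [e_p1 <- <-] [p2 [e_p2 <- <-]]; exists (p1 ++ p2).
by rewrite cat_path last_cat size_cat e_p1 e_p2.
Qed.

Lemma walk0_eq u w : walk e u w 0 -> u = w.
Proof. by case=> -[|x p] [] //= _ ->. Qed.

Lemma walk1_arc u w : walk e u w 1 -> e u w.
Proof. by case=> -[|x [|y p]] [] //= /andP [e_ux _] <-. Qed.

Lemma reachable_refl u : reachable e u u.
Proof. by exists 0, [::]. Qed.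

Lemma reachable_arc u v : e u v -> reachable e u v.
Proof. by move=> e_uv; exists 1, [:: v]; rewrite /= e_uv. Qed.

Lemma reachable_trans u v w : reachable e u v -> reachable e v w -> reachable e u w.
Proof. by case=> k1 W1 [k2 W2]; exists (k1 + k2); apply: walk_cat W1 W2. Qed.

Lemma on_sp_reachable u v w : on_sp e u v w -> reachable e u v /\ reachable e v w.
Proof. by case=> d1 [d2 [[W1 _] [W2 _] _]]; split; [exists d1 | exists d2]. Qed.

End Walks.

Section GreedyLabels.
Variables (V : finType) (e : rel V).

Lemma center_subX (L : labels V) v :
  center e L v \subset setX [set u | `[< reachable e u v >]] [set w | `[< reachable e v w >]].
Proof.
apply/subsetP => -[u w]; rewrite !inE => /andP [_ /asboolP /on_sp_reachable [r_uv r_vw]].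
by apply/andP; split; apply/asboolP.
Qed.

Lemma grun_Lf_reachable s u x : x \in (grun e s).1 u -> x \in s /\ reachable e u x.
Proof.
elim/last_ind: s u x => [|s v IHs] u x; first by rewrite inE.
rewrite /grun foldl_rcons -/(grun e s) /gstep /= mem_rcons in_cons.
case: ifP => [/existsP [w] | _]; last by case/IHs=> -> r_ux; rewrite orbT.
rewrite !inE => /andP [_ /asboolP /on_sp_reachable [r_uv _]].
by case/orP=> [/eqP -> | /IHs [-> r_ux]]; rewrite ?eqxx ?orbT.
Qed.

Lemma grun_Lb_subset s (L : labels V) w : L.2 w \subset (foldl (gstep e) L s).2 w.
Proof.
elim: s L => [|v s IHs] L /=; first exact: subxx.
apply: subset_trans (IHs _); rewrite /gstep /=; case: ifP => _; [exact: subsetUr | exact: subxx].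
Qed.

Lemma center_mem_grun_Lb s1 v s2 u w :
  (u, w) \in center e (grun e s1) v -> v \in (grun e (s1 ++ v :: s2)).2 w.
Proof.
move=> uw_center; rewrite /grun foldl_cat /=; apply: (subsetP (grun_Lb_subset _ _ _)).
by rewrite /gstep /= ifT ?setU11 //; apply/existsP; exists u.
Qed.

End GreedyLabels.

Section ThreeLayers.
Variables (V : finType) (layer : V -> nat) (parent : V -> V).
Hypothesis layer_le2 : forall v, layer v <= 2.
Hypothesis layer_parent : forall v, layer v = 2 -> layer (parent v) = 1.

Definition layered_arc (u v : V) : bool :=
  ((layer u == 0) && (layer v == 1)) || [&& layer u == 1, layer v == 2 & parent v == u].

Local Notation arc := layered_arc.
Local Notation reach := (reachable arc).

Definition sources := [set v | layer v == 0].
Definition hubs := [set v | layer v == 1].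
Definition leaves := [set v | layer v == 2].
Definition children h := [set w | (layer w == 2) && (parent w == h)].

Lemma walk_layer u w k : walk arc u w k -> layer w = layer u + k.
Proof.
case=> p [+ <- <-]; elim: p u => [|v p IHp] u /=; first by rewrite addn0.
case/andP=> arc_uv /IHp ->; rewrite addnS -addSn; congr (_ + _).
by case/orP: arc_uv => [/andP [/eqP -> /eqP ->] | /and3P [/eqP -> /eqP -> _]].
Qed.

Lemma walk_dist_is u w k : walk arc u w k -> dist_is arc u w k.
Proof.
move=> W; split=> // k' W'.
by move: (walk_layer W) (walk_layer W') => -> /eqP; rewrite eqn_add2l => /eqP ->.
Qed.

Lemma on_sp_layered u v w : reach u v -> reach v w -> on_sp arc u v w.
Proof.
case=> k1 W1 [k2 W2]; exists k1, k2.
by split; apply: walk_dist_is => //; apply: walk_cat W1 W2.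
Qed.

Lemma reachable_layer u w : reach u w -> u = w \/ layer u < layer w.
Proof.
case=> -[|k] W; first by left; apply: walk0_eq W.
by right; rewrite (walk_layer W); lia.
Qed.

Lemma reachable_arc_layer u w : reach u w -> layer w = (layer u).+1 -> arc u w.
Proof.
case=> -[|[|k]] W; rewrite (walk_layer W); try lia.
by move=> _; apply: walk1_arc.
Qed.

Lemma reachable_source x w : layer x = 0 -> layer w != 0 -> reach x w.
Proof.
move=> x0 w_n0; have [w1 | w_n1] := eqVneq (layer w) 1.
  by apply: reachable_arc; rewrite /arc x0 w1.
have w2 : layer w = 2 by have := layer_le2 w; lia.
apply: (reachable_trans (v := parent w)); apply: reachable_arc.
  by rewrite /arc x0 layer_parent.
by rewrite /arc layer_parent // w2 !eqxx orbT.
Qed.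


Lemma grun_Lf_fresh_source s x :
  all [in sources] s -> x \in sources -> x \notin s -> (grun arc s).1 x = set0.
Proof.
move=> s_src; rewrite inE => /eqP x0 x_s; apply/setP => y; rewrite in_set0.
apply/negbTE/negP => /grun_Lf_reachable [y_s [k W]].
have k0 : k = 0.
  by have := walk_layer W; have := allP s_src y y_s; rewrite inE x0 => /eqP ->.
by move: W; rewrite k0 => /walk0_eq x_y; rewrite x_y y_s in x_s.
Qed.

Lemma center_fresh_source s x w : all [in sources] s -> x \in sources -> x \notin s ->
  reach x w -> (x, w) \in center arc (grun arc s) x.
Proof.
move=> s_src x_src x_s r_xw; rewrite !inE; apply/andP; split; apply/asboolP.
  by split=> // -[h []]; rewrite grun_Lf_fresh_source // in_set0.
exact: on_sp_layered (reachable_refl _ _) r_xw.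
Qed.

Lemma card_center_fresh_source s x : all [in sources] s -> x \in sources -> x \notin s ->
  #|~: sources|.+1 <= #|center arc (grun arc s) x|.
Proof.
move=> s_src x_src x_s.
have sub : [set (x, w) | w in x |: ~: sources] \subset center arc (grun arc s) x.
  apply/subsetP => _ /imsetP [w w_x ->]; rewrite !inE in w_x.
  apply: center_fresh_source => //; case/orP: w_x => [/eqP -> | w_n0].
    exact: reachable_refl.
  by move: x_src; rewrite inE => /eqP x0; apply: reachable_source.
apply: leq_trans (subset_leq_card sub).
by rewrite card_imset => [|a b [] //]; rewrite cardsU1 in_setC x_src.
Qed.

Section GreedyRun.
Variable q : nat.
Hypothesis card_children : forall h, #|children h| <= q.

Lemma card_center_hub (L : labels V) v : layer v = 1 -> #|center arc L v| <= #|sources|.+1 * q.+1.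
Proof.
move=> v1; apply: leq_trans (subset_leq_card (center_subX arc L v)) _; rewrite cardsX.
have in_sub : [set u | `[< reach u v >]] \subset v |: sources.
  apply/subsetP => u; rewrite !inE => /asboolP /reachable_layer [-> | ]; first by rewrite eqxx.
  by rewrite v1 ltnS leqn0 => ->; rewrite orbT.
have out_sub : [set w | `[< reach v w >]] \subset v |: children v.
  apply/subsetP => w; rewrite !inE => /asboolP r_vw.
  case: (reachable_layer r_vw) => [-> | lt_vw]; first by rewrite eqxx.
  have w2 : layer w = 2 by have := layer_le2 w; lia.
  have := reachable_arc_layer r_vw; rewrite w2 v1 /arc v1 w2 /= => /(_ erefl) ->.
  by rewrite orbT.
apply: leq_mul.
  exact: leq_trans (subset_leq_card in_sub) (card_setU1_le _ _).
apply: leq_trans (subset_leq_card out_sub) (leq_trans (card_setU1_le _ _) _).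
by rewrite ltnS card_children.
Qed.

Lemma card_center_leaf (L : labels V) v : layer v = 2 -> #|center arc L v| <= #|sources|.+2.
Proof.
move=> v2; apply: leq_trans (subset_leq_card (center_subX arc L v)) _; rewrite cardsX.
have in_sub : [set u | `[< reach u v >]] \subset v |: (parent v |: sources).
  apply/subsetP => u; rewrite !inE => /asboolP r_uv.
  case: (reachable_layer r_uv) => [-> | ]; first by rewrite eqxx.
  rewrite v2 ltnS leq_eqVlt ltnS leqn0 => /orP [/eqP u1 | ->]; last by rewrite !orbT.
  have := reachable_arc_layer r_uv; rewrite u1 v2 /arc u1 v2 /= => /(_ erefl) /eqP ->.
  by rewrite eqxx orbT.
have out_sub : [set w | `[< reach v w >]] \subset [set v].
  apply/subsetP => w; rewrite !inE => /asboolP /reachable_layer [-> // | ].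
  by have := layer_le2 w; rewrite v2; lia.
have := subset_leq_card in_sub; have := subset_leq_card out_sub; rewrite cards1.
by have := card_setU1_le v (parent v |: sources); have := card_setU1_le (parent v) sources; nia.
Qed.

Hypothesis hub_center_small : #|sources|.+1 * q.+1 <= #|~: sources|.
Hypothesis leaf_center_small : #|sources|.+2 <= #|~: sources|.

Lemma card_center_nonsource (L : labels V) v :
  v \notin sources -> #|center arc L v| <= #|~: sources|.
Proof.
rewrite inE => v_n0; have [v1 | v_n1] := eqVneq (layer v) 1.
  exact: leq_trans (card_center_hub L v1) hub_center_small.
have v2 : layer v = 2 by have := layer_le2 v; move: v_n0; lia.
exact: leq_trans (card_center_leaf L v2) leaf_center_small.
Qed.

Variable s : seq V.
Hypothesis s_run : ghhl_run arc s.

Lemma ghhl_next_source s1 v s2 x : s = s1 ++ v :: s2 -> all [in sources] s1 ->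
  x \in sources -> x \notin s1 -> v \in sources.
Proof.
move=> def_s s1_src x_src x_s1; have [/(_ s1 v s2 def_s) [_ _ v_max] _] := s_run.
apply: contraT => v_n0.
have := leq_trans (card_center_fresh_source s1_src x_src x_s1) (v_max x x_s1).
by rewrite ltnNge card_center_nonsource.
Qed.

Lemma ghhl_sources_first x : x \in sources -> all [in sources] (take (index x s) s).
Proof.
move=> x_src; suff take_src i : i <= index x s -> all [in sources] (take i s) by apply: take_src.
elim: i => [|i IHi] lt_i_x; first by rewrite take0.
have i_s : i < size s := leq_trans lt_i_x (index_size x s).
have x_take : x \notin take i s by rewrite in_take_leq ?(ltnW i_s) // -leqNgt ltnW.
have take_i_src := IHi (ltnW lt_i_x).
rewrite (take_nth x i_s) all_rcons take_i_src andbT.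
apply: (ghhl_next_source (s2 := drop i.+1 s) _ take_i_src x_src x_take).
by rewrite -{1}(cat_take_drop i s) (drop_nth x i_s).
Qed.

Lemma ghhl_mem_source x : x \in sources -> x \in s.
Proof.
move=> x_src; apply: contraT => x_ns.
have := ghhl_sources_first x_src; rewrite memNindex // take_size => s_src.
have [_ /setP /(_ (x, x))] := s_run; rewrite in_set0.
move: (center_fresh_source s_src x_src x_ns (reachable_refl _ x)).
by rewrite in_set => /andP [->].
Qed.

Lemma ghhl_source_in_Lb x w : x \in sources -> w \in leaves -> x \in (grun arc s).2 w.
Proof.
move=> x_src w_leaf; set i := index x s.
have def_s : s = take i s ++ x :: drop i.+1 s.
  by rewrite -{1}(cat_take_drop i s) (drop_nth x) ?index_mem ?nth_index ?ghhl_mem_source.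
have [/(_ _ _ _ def_s) [_ x_take _] _] := s_run.
have r_xw : reach x w.
  by move: x_src w_leaf; rewrite !inE => /eqP x0 /eqP w2; apply: reachable_source; rewrite ?w2.
rewrite def_s; apply: center_mem_grun_Lb.
exact: center_fresh_source (ghhl_sources_first x_src) x_src x_take r_xw.
Qed.

Lemma ghhl_size_ge : #|leaves| * #|sources| <= hl_size (grun arc s).1 (grun arc s).2.
Proof.
rewrite /hl_size -sum_nat_const.
apply: leq_trans (_ : \sum_(w in leaves) #|(grun arc s).2 w| <= _).
  apply: leq_sum => w w_leaf; apply/subset_leq_card/subsetP => x x_src.
  exact: ghhl_source_in_Lb.
rewrite [X in _ <= X](bigID [in leaves]) /=; apply: leq_trans (leq_addr _ _).
by apply: leq_sum => w _; apply: leq_addl.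
Qed.

End GreedyRun.

Definition hub_Lf v := if layer v == 0 then v |: hubs else [set v].
Definition hub_Lb v := if layer v == 2 then [set parent v; v] else [set v].

Lemma hub_Lf_self v : v \in hub_Lf v.
Proof. by rewrite /hub_Lf; case: ifP; rewrite !inE eqxx. Qed.

Lemma hub_Lb_self v : v \in hub_Lb v.
Proof. by rewrite /hub_Lb; case: ifP; rewrite !inE eqxx ?orbT. Qed.

Lemma hub_Lf_source x h : layer x = 0 -> layer h = 1 -> h \in hub_Lf x.
Proof. by move=> x0 h1; rewrite /hub_Lf x0 !inE h1 eqxx orbT. Qed.

Lemma hub_Lb_leaf w : layer w = 2 -> parent w \in hub_Lb w.
Proof. by move=> w2; rewrite /hub_Lb w2 !inE eqxx. Qed.

Lemma hub_labelingP : is_hub_labeling arc hub_Lf hub_Lb.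
Proof.
move=> u w r_uw.
have cover_by h : reach u h -> reach h w -> h \in hub_Lf u -> h \in hub_Lb w ->
    covers arc hub_Lf hub_Lb u w.
  by move=> r_uh r_hw h_u h_w; exists h; split=> //; apply: on_sp_layered.
have [eq_uw | lt_uw] := reachable_layer r_uw.
  by apply: cover_by (reachable_refl _ u) r_uw (hub_Lf_self u) _; rewrite -eq_uw hub_Lb_self.
have [succ_uw | ] := eqVneq (layer w) (layer u).+1.
  have := reachable_arc_layer r_uw succ_uw; rewrite /arc.
  case/orP=> [/andP [/eqP u0 /eqP w1] | /and3P [_ /eqP w2 /eqP par_w]].
    exact: cover_by r_uw (reachable_refl _ w) (hub_Lf_source u0 w1) (hub_Lb_self w).
  apply: cover_by (reachable_refl _ u) r_uw (hub_Lf_self u) _.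
  by rewrite -par_w hub_Lb_leaf.
move=> not_succ; have u0 : layer u = 0 by have := layer_le2 w; lia.
have w2 : layer w = 2 by have := layer_le2 w; lia.
have p1 := layer_parent w2.
apply: cover_by (hub_Lf_source u0 p1) (hub_Lb_leaf w2).
  by apply: reachable_source; rewrite ?p1.
by apply: reachable_arc; rewrite /arc p1 w2 !eqxx orbT.
Qed.

Lemma mem_hub_labels u v :
  u \in hub_Lf v :|: hub_Lb v -> u = v \/ (layer u = 1 /\ layer v <> 1).
Proof.
rewrite /hub_Lf /hub_Lb in_setU; case: ifP => [/eqP v0 | _]; case: ifP => [/eqP v2 | _];
  rewrite ?in_setU1 !inE; try lia.
- by case/orP=> [/orP [/eqP -> | /eqP u1] | /eqP ->]; [left | right; rewrite v0 | left].
- by case/orP=> [/eqP -> | /orP [/eqP -> | /eqP ->]]; [left | right; rewrite layer_parent ?v2 | left].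
- by rewrite orbb => /eqP ->; left.
Qed.

Lemma hub_labeling_hierarchical (pi : V -> 'I_#|V|) : bijective pi ->
  (forall h v, layer h = 1 -> layer v <> 1 -> pi h <= pi v) ->
  is_hierarchical hub_Lf hub_Lb.
Proof.
move=> pi_bij pi_hubs_first; exists pi; split=> // u v /mem_hub_labels [-> // | [u1 v_n1]].
exact: pi_hubs_first.
Qed.

Lemma hub_labeling_size : hl_size hub_Lf hub_Lb <= 3 * #|V| + #|sources| * #|hubs|.
Proof.
rewrite /hl_size.
apply: leq_trans (_ : \sum_v (3 + (if v \in sources then #|hubs| else 0)) <= _).
  apply: leq_sum => v _; rewrite /hub_Lf /hub_Lb inE.
  have := card_setU1_le v hubs; have := cards2 (parent v) v.
  by case: ifP => _; case: ifP => _; rewrite ?cards1; case: (_ != _); lia.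
by rewrite big_split /= sum_nat_const -big_mkcond sum_nat_const mulnC.
Qed.

End ThreeLayers.

Lemma card_ord_interval m lo hi : lo <= hi <= m.+1 ->
  #|[set i : 'I_m.+1 | lo <= i < hi]| = hi - lo.
Proof.
case/andP=> le_lo_hi le_hi_m.
have shift_inj : injective (fun j : 'I_(hi - lo) => inord (lo + j) : 'I_m.+1).
  move=> j1 j2 /(congr1 val) /=; rewrite !inordK => [/addnI/val_inj // | |];
    by have := ltn_ord j1; have := ltn_ord j2; lia.
rewrite -[hi - lo]card_ord -cardsT -(card_imset _ shift_inj).
apply: eq_card => i; rewrite inE; apply/idP/imsetP => [/andP [lo_i i_hi] | [j _ ->]].
  have j_lt : i - lo < hi - lo by lia.
  by exists (Ordinal j_lt) => //; apply: val_inj; rewrite /= inordK; lia.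
by rewrite inordK; have := ltn_ord j; lia.
Qed.

Section GreedyTrap.
Variable k : nat.

Definition trap_size := (k + k + k.+1 * k.+1).+1.

(* Vertices 0..k are the hubs, k+1..2k the sources and the others the leaves;
   leaf 2k+1 + h(k+1) + j is the j-th child of hub h. *)
Definition trap_layer (i : 'I_trap_size) : nat :=
  if i < k.+1 then 1 else if i < (k + k).+1 then 0 else 2.

Definition trap_parent (i : 'I_trap_size) : 'I_trap_size := inord ((i - (k + k).+1) %/ k.+1).

Lemma trap_layer_le2 i : trap_layer i <= 2.
Proof. by rewrite /trap_layer; case: ifP => // _; case: ifP. Qed.

Lemma trap_parent_val i : trap_layer i = 2 -> trap_parent i = (i - (k + k).+1) %/ k.+1 :> nat.
Proof.
move=> i2; rewrite inordK //; apply: leq_ltn_trans (leq_div _ _) _.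
by have := ltn_ord i; rewrite /trap_size; lia.
Qed.

Lemma trap_layer_parent i : trap_layer i = 2 -> trap_layer (trap_parent i) = 1.
Proof.
move=> i2; rewrite /trap_layer trap_parent_val // ltn_divLR // ifT //.
by have := ltn_ord i; rewrite /trap_size; lia.
Qed.

Lemma card_trap_sources : #|sources trap_layer| = k.
Proof.
have -> : sources trap_layer = [set i : 'I_trap_size | k.+1 <= i < (k + k).+1].
  by apply/setP => i; rewrite !inE /trap_layer; case: ifP => ?; try case: ifP => ?; lia.
by rewrite card_ord_interval /trap_size; lia.
Qed.

Lemma card_trap_nonsources : #|~: sources trap_layer| = k.+1 * k.+2.
Proof. by have := cardsC (sources trap_layer); rewrite card_trap_sources card_ord /trap_size; lia. Qed.

Lemma card_trap_hubs : #|hubs trap_layer| = k.+1.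
Proof.
have -> : hubs trap_layer = [set i : 'I_trap_size | 0 <= i < k.+1].
  by apply/setP => i; rewrite !inE /trap_layer; case: ifP => ?; try case: ifP => ?; lia.
by rewrite card_ord_interval /trap_size; lia.
Qed.

Lemma card_trap_leaves : #|leaves trap_layer| = k.+1 * k.+1.
Proof.
have -> : leaves trap_layer = [set i : 'I_trap_size | (k + k).+1 <= i < trap_size].
  apply/setP => i; have := ltn_ord i.
  by rewrite !inE /trap_layer; case: ifP => ?; try case: ifP => ?; lia.
by rewrite card_ord_interval /trap_size; lia.
Qed.

Lemma card_trap_children h : #|children trap_layer trap_parent h| <= k.+1.
Proof.
pose child (j : 'I_k.+1) : 'I_trap_size := inord ((k + k).+1 + h * k.+1 + j).
have sub : children trap_layer trap_parent h \subset [set child j | j : 'I_k.+1].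
  apply/subsetP => v; rewrite !inE => /andP [/eqP v2 /eqP par_v].
  have le_v : (k + k).+1 <= v.
    by move: v2; rewrite /trap_layer; case: ifP => // _; case: ifP => // ?; lia.
  have def_h := trap_parent_val v2; rewrite par_v in def_h.
  have := divn_eq (v - (k + k).+1) k.+1; rewrite -def_h => eq_v.
  pose j := Ordinal (ltn_pmod (v - (k + k).+1) (ltn0Sn k)).
  have def_v : (k + k).+1 + h * k.+1 + j = v by rewrite -addnA -eq_v subnKC.
  by apply/imsetP; exists j => //; apply: ord_inj; rewrite /child def_v inordK.
by apply: leq_trans (subset_leq_card sub) (leq_trans (leq_imset_card _ _) _); rewrite card_ord.
Qed.

Lemma trap_hubs_first (i j : 'I_trap_size) : trap_layer i = 1 -> trap_layer j <> 1 -> i <= j.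
Proof. by rewrite /trap_layer; case: ifP => ?; case: ifP => ?; try case: ifP => ?; lia. Qed.

Lemma trap_size_cube_le z : 0 < k -> k.+1 * k.+1 * k <= z -> trap_size ^ 3 <= 343 * z ^ 2.
Proof.
move=> k_gt0 le_z; have le_n : trap_size <= 7 * (k * k) by rewrite /trap_size; nia.
apply: leq_trans (_ : (7 * (k * k)) ^ 3 <= _); first by rewrite leq_exp2r.
have -> : (7 * (k * k)) ^ 3 = 343 * (k * k * k) ^ 2 by rewrite !expnS expn0; nia.
by rewrite leq_mul2l leq_exp2r //=; apply: leq_trans le_z; nia.
Qed.

End GreedyTrap.

Theorem mainTheorem7 :
  exists c C : nat, [/\ 0 < c, 0 < C &
    forall N : nat, exists n : nat, N <= n /\ exists e : rel 'I_n,
      (* every run of g-HHL yields size Omega(n^{3/2}), i.e. n^3 <= c * size^2 *)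
      (forall s : seq 'I_n, ghhl_run e s ->
         n ^ 3 <= c * (hl_size (grun e s).1 (grun e s).2) ^ 2) /\
      (* an optimal HHL has size O(n) *)
      (exists Lf Lb : 'I_n -> {set 'I_n},
         [/\ is_hub_labeling e Lf Lb, is_hierarchical Lf Lb & hl_size Lf Lb <= C * n])].
Proof.
exists 343, 4; split=> // N; pose k := N.+1.
have layer_le2 := @trap_layer_le2 k; have layer_parent := @trap_layer_parent k.
have hub_small : #|sources (@trap_layer k)|.+1 * k.+2 <= #|~: sources (@trap_layer k)|.
  by rewrite card_trap_sources card_trap_nonsources.
have leaf_small : #|sources (@trap_layer k)|.+2 <= #|~: sources (@trap_layer k)|.
  by rewrite card_trap_sources card_trap_nonsources; nia.
exists (trap_size k); split; first by rewrite /trap_size; lia.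
exists (layered_arc (@trap_layer k) (@trap_parent k)); split.
  move=> s s_run; apply: trap_size_cube_le => //.
  have := ghhl_size_ge layer_le2 layer_parent (@card_trap_children k) hub_small leaf_small s_run.
  by rewrite card_trap_leaves card_trap_sources.
exists (hub_Lf (@trap_layer k)), (hub_Lb (@trap_layer k) (@trap_parent k)); split.
- exact: hub_labelingP.
- apply: (hub_labeling_hierarchical layer_parent (pi := cast_ord (esym (card_ord _)))).
    by exists (cast_ord (card_ord _)); [apply: cast_ordKV | apply: cast_ordK].
  exact: trap_hubs_first.
- apply: leq_trans (hub_labeling_size _ _) _.
  by rewrite card_trap_sources card_trap_hubs card_ord /trap_size; nia.
Qed.
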